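(* The third order mock theta function $\psi_3(q)=\sum_{n\ge0}\frac{q^{n^2}}{(q;q^2)_n}$ is the generating function $\sum_\pi q^{|\pi|}$ over partitions $\pi$ with $n$ copies of $n$ (including the empty one) in which, with parts in ascending lexicographic order, the weighted difference between each part and the preceding one is exactly $0$, and the smallest part is of the form $j_j$.
   Context: $M=\{m_i: 1\le i\le m\}$; a partition with $n$ copies of $n$ is a finite multiset of elements of $M$, $|\pi|$ the sum of values. Lexicographic order: $m_i>n_j$ iff $m>n$, or $m=n$ and $i>j$. Weighted difference $((m_i-n_j))=m-n-i-j$. $(a;q)_n=\prod_{j=0}^{n-1}(1-aq^j)$. *)

From mathcomp Require Import all_boot all_order all_algebra.
Set Implicit Arguments. Unset Strict Implicit. Unset Printing Implicit Defensive.
Import GRing.Theory Num.Theory.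

(* Truncation of the formal power series 1/(1 - q^k) = sum_{i>=0} q^(k i)
   to the terms of index i <= N (enough to determine all coefficients of
   q^0 .. q^N when k >= 1). *)
Definition geom_trunc (k N : nat) : {poly int} :=
  (\sum_(i < N.+1) 'X^(k * i))%R.

(* Coefficient of q^N in  psi_3(q) = sum_{n>=0} q^(n^2) / (q;q^2)_n,
   where (q;q^2)_n = prod_{j=0}^{n-1} (1 - q^(2j+1)).
   Terms with n > N contribute only to powers q^(n^2) with n^2 > N. *)
Definition psi3_coef (N : nat) : int :=
  ((\sum_(n < N.+1) 'X^(n ^ 2) * \prod_(j < n) geom_trunc (2 * j + 1) N)
     : {poly int})`_N.

(* A part m_i (1 <= i <= m) is represented by the pair (m, i). *)
Definition part := (nat * nat)%type.

Definition is_part (p : part) : bool := (0 < p.2 <= p.1).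

Definition lex_le (a b : part) : bool :=
  (a.1 < b.1) || ((a.1 == b.1) && (a.2 <= b.2)).

Definition wdiff (a b : part) : int :=
  (Posz a.1 - Posz b.1 - Posz a.2 - Posz b.2)%R.

(* A partition with n copies of n, i.e. a finite multiset of parts,
   is represented canonically by the list of its parts in ascending
   lexicographic order. *)
Definition is_nncopies_partition (s : seq part) : bool :=
  all is_part s && sorted lex_le s.

Definition weight (s : seq part) : nat := sumn (map fst s).

Definition consecutive_wdiff0 (s : seq part) : bool :=
  sorted (fun a b => wdiff b a == 0%R) s.

Definition smallest_diag (s : seq part) : bool :=
  if s is x :: _ then x.1 == x.2 else true.

Definition psi3_partition (N : nat) (s : seq part) : bool :=
  [&& is_nncopies_partition s, weight s == N,
      consecutive_wdiff0 s & smallest_diag s].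

From mathcomp Require Import all_boot all_order all_algebra.
From mathcomp Require Import zify.
Import GRing.Theory.

(* In a partition counted by psi_3 each part y after the part x
   satisfies ((y - x)) = 0, i.e. y.1 = x.1 + x.2 + y.2, and the first part is
   j_j; hence the whole partition is determined by the sequence r of its
   subscripts (the "code" of the partition), and every sequence of positive
   integers is the code of exactly one such partition, namely [diag_chain r].
   Writing r = [:: r_0; ...; r_(n-1)], the weight of [diag_chain r] is
   [odd_weight r] = sum_k (2 (n - 1 - k) + 1) r_k.
   On the analytic side q^(n^2)/(q;q^2)_n = prod_(j<n) q^(2j+1)/(1 - q^(2j+1))
   = prod_(j<n) sum_(d>=1) q^((2j+1) d), so the coefficient of q^N in psi_3 is
   the number of positive sequences r with odd_weight r = N.  All such codes
   have length and entries at most N, so they are found in the explicit finite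
   list [short_seqs N]; filtering it by weight and mapping [diag_chain] over
   it gives the required duplicate-free list of partitions. *)

Fixpoint chain_from (m i : nat) (r : seq nat) : seq part :=
  if r is j :: r' then (m + i + j, j) :: chain_from (m + i + j) j r' else [::].

Definition diag_chain (r : seq nat) : seq part :=
  if r is i :: r' then (i, i) :: chain_from i i r' else [::].

Lemma snd_chain_from m i r : map snd (chain_from m i r) = r.
Proof. by elim: r m i => //= j r IH m i; rewrite IH. Qed.

Lemma snd_diag_chain r : map snd (diag_chain r) = r.
Proof. by case: r => //= i r; rewrite snd_chain_from. Qed.

Lemma diag_chain_inj : injective diag_chain.
Proof. by move=> r r' /(congr1 (map snd)); rewrite !snd_diag_chain. Qed.

Lemma wdiff0E (x y : part) : (wdiff y x == 0%R) = (y.1 == x.1 + x.2 + y.2).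
Proof. by rewrite /wdiff; apply/eqP/eqP => H; lia. Qed.

Lemma chain_from_sorted x r : sorted (fun a b => wdiff b a == 0%R) (x :: r) ->
  r = chain_from x.1 x.2 (map snd r).
Proof.
elim: r x => //= y r IH x /andP [yE r_sorted].
rewrite wdiff0E in yE; move/eqP: yE => yE.
by rewrite -yE -(IH y r_sorted); case: y {r_sorted} yE.
Qed.

Lemma diag_chain_snd s :
  consecutive_wdiff0 s -> smallest_diag s -> s = diag_chain (map snd s).
Proof.
case: s => [|[a b] r] //= s_sorted /eqP ab; subst b.
by rewrite -(chain_from_sorted _ _ s_sorted).
Qed.

Lemma chain_from_props m i r : 0 < i -> all (fun j => 0 < j) r ->
  [/\ all is_part (chain_from m i r), path lex_le (m, i) (chain_from m i r)
    & path (fun a b => wdiff b a == 0%R) (m, i) (chain_from m i r)].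
Proof.
elim: r m i => //= j r IH m i i_gt0 /andP [j_gt0 r_pos].
have [parts ascending wdiffs] := IH (m + i + j) j j_gt0 r_pos.
rewrite parts ascending wdiffs wdiff0E !andbT /is_part /lex_le /= j_gt0.
by split=> //; lia.
Qed.

(* The weight of the partition coded by r, read off the code: each subscript
   r_k is counted once in its own part and twice in every later part. *)
Fixpoint odd_weight (r : seq nat) : nat :=
  if r is x :: r' then (2 * size r' + 1) * x + odd_weight r' else 0.

Lemma weight_chain_from m i r :
  weight (chain_from m i r) = size r * (m + i) + odd_weight r.
Proof. by elim: r m i => //= j r IH m i; rewrite /weight /= -/(weight _) IH; lia. Qed.

Lemma weight_diag_chain r : weight (diag_chain r) = odd_weight r.
Proof. by case: r => //= i r; rewrite /weight /= -/(weight _) weight_chain_from; lia. Qed.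

Lemma psi3_partition_diag_chain N r : all (fun j => 0 < j) r ->
  psi3_partition N (diag_chain r) = (odd_weight r == N).
Proof.
case: r => [_|i r /andP [i_gt0 r_pos]].
  by rewrite /psi3_partition /= andbT.
have [parts ascending wdiffs] := chain_from_props i i r i_gt0 r_pos.
rewrite -weight_diag_chain /psi3_partition /is_nncopies_partition /consecutive_wdiff0 /=.
by rewrite parts ascending wdiffs /is_part /= i_gt0 leqnn eqxx !andbT.
Qed.

Lemma odd_weight_bounds r : all (fun j => 0 < j) r ->
  size r <= odd_weight r /\ all (fun j => j <= odd_weight r) r.
Proof.
elim: r => //= x r IH /andP [x_gt0 /IH [size_le entries_le]].
have x_le : x <= (2 * size r + 1) * x + odd_weight r by nia.
split; first by lia.
by rewrite x_le; apply: sub_all entries_le => j /=; lia.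
Qed.

Definition positive_upto (N : nat) : seq nat := iota 1 N.+1.

Fixpoint tuples_upto (N n : nat) : seq (seq nat) :=
  if n is n'.+1 then [seq x :: t | x <- positive_upto N, t <- tuples_upto N n']
  else [:: [::]].

Definition short_seqs (N : nat) : seq (seq nat) :=
  [seq t | n <- iota 0 N.+1, t <- tuples_upto N n].

Lemma mem_tuples_upto N n t :
  (t \in tuples_upto N n) = (size t == n) && all (mem (positive_upto N)) t.
Proof.
elim: n t => [|n IH] t; first by case: t.
apply/allpairsP/idP => [[[x t'] /= [x_in t'_in ->]] | ].
  by move: t'_in; rewrite /= IH eqSS x_in => /andP [-> ->].
case: t => [|x t] //= /andP [size_t /andP [x_in t_in]].
by exists (x, t); rewrite IH -eqSS size_t.
Qed.

Lemma uniq_tuples_upto N n : uniq (tuples_upto N n).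
Proof.
elim: n => [//|n IH]; apply: allpairs_uniq => //; first exact: iota_uniq.
by move=> [a b] [c d] _ _ /= [-> ->].
Qed.

Lemma mem_short_seqs N t :
  (t \in short_seqs N) = (size t <= N) && all (mem (positive_upto N)) t.
Proof.
apply/allpairsPdep/idP => [[n [t' [n_in t'_in ->]]] | /andP [size_t t_in]].
- by move: t'_in n_in; rewrite mem_tuples_upto mem_iota => /andP [/eqP -> ->]; rewrite andbT.
- by exists (size t), t; rewrite mem_iota mem_tuples_upto eqxx t_in; split.
Qed.

Lemma uniq_short_seqs N : uniq (short_seqs N).
Proof.
apply: allpairs_uniq_dep => [|n _|]; [exact: iota_uniq | exact: uniq_tuples_upto |].
move=> [a b] [c d] /allpairsPdep [n [t [_ t_in [-> ->]]]]
  /allpairsPdep [n' [t' [_ t'_in [-> ->]]]] /= tt'.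
by move: t_in t'_in; rewrite tt' !mem_tuples_upto => /andP [/eqP <- _] /andP [/eqP <- _].
Qed.

Definition psi3_codes (N : nat) : seq (seq nat) :=
  [seq r <- short_seqs N | odd_weight r == N].

(* By [odd_weight_bounds] the search space contains every positive code of
   weight N, so [psi3_codes N] holds exactly those codes. *)
Lemma mem_psi3_codes N r :
  (r \in psi3_codes N) = all (fun j => 0 < j) r && (odd_weight r == N).
Proof.
rewrite mem_filter andbC; apply/andP/andP => -[r_in wr]; split=> //.
  move: r_in; rewrite mem_short_seqs => /andP [_]; apply: sub_all => j.
  by rewrite inE mem_iota; lia.
have [size_le entries_le] := odd_weight_bounds _ r_in.
rewrite mem_short_seqs -(eqP wr) size_le; apply/allP => j j_in.
by move: (allP r_in j j_in) (allP entries_le j j_in); rewrite inE mem_iota; lia.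
Qed.

Lemma psi3_partition_code N s : psi3_partition N s ->
  map snd s \in psi3_codes N /\ s = diag_chain (map snd s).
Proof.
move=> s_psi3; have /and4P [/andP [s_parts _] _ s_wdiff s_diag] := s_psi3.
have sE := diag_chain_snd _ s_wdiff s_diag; split=> //.
have s_pos : all (fun j => 0 < j) (map snd s).
  by rewrite all_map; apply: sub_all s_parts => -[m i] /andP [].
by rewrite mem_psi3_codes s_pos -psi3_partition_diag_chain // -sE.
Qed.

Local Open Scope ring_scope.

Lemma geom_trunc_shift k N :
  'X^k * geom_trunc k N = \sum_(d <- positive_upto N) ('X^(k * d) : {poly int}).
Proof.
rewrite /geom_trunc mulr_sumr /positive_upto -[iota 1 _]/(iota (1 + 0) N.+1) iotaDl big_map.
rewrite -/(index_iota 0 N.+1) big_mkord.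
by apply: eq_bigr => i _; rewrite -exprD add1n mulnS.
Qed.

(* q^(n^2)/(q;q^2)_n = prod_(j<n) q^(2j+1)/(1 - q^(2j+1)), since n^2 is the sum
   of the first n odd numbers. *)
Lemma psi3_term_prod N n :
  'X^(n ^ 2) * \prod_(j < n) geom_trunc (2 * j + 1) N =
  \prod_(j < n) \sum_(d <- positive_upto N) ('X^((2 * j + 1) * d) : {poly int}).
Proof.
elim: n => [|n IH]; first by rewrite !big_ord0 mulr1.
have odd_sum : (n.+1 ^ 2 = n ^ 2 + (2 * n + 1))%N by lia.
rewrite !big_ord_recr /= -IH -geom_trunc_shift odd_sum exprD -!mulrA.
by congr (_ * _); rewrite mulrCA.
Qed.

Lemma prod_tuples_upto N n :
  \prod_(j < n) \sum_(d <- positive_upto N) ('X^((2 * j + 1) * d) : {poly int})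
  = \sum_(t <- tuples_upto N n) 'X^(odd_weight t).
Proof.
elim: n => [|n IH]; first by rewrite big_ord0 big_seq1.
rewrite big_ord_recr IH big_allpairs_dep /= mulrC big_distrl /=.
apply: eq_bigr => x _; rewrite big_distrr /=; apply: eq_big_seq => t.
by rewrite mem_tuples_upto -exprD => /andP [/eqP ->].
Qed.

Lemma psi3_coef_count N : psi3_coef N = Posz (size (psi3_codes N)).
Proof.
have iotaE : iota 0 N.+1 = index_iota 0 N.+1 by rewrite /index_iota subn0.
rewrite /psi3_coef /psi3_codes /short_seqs size_filter -sum1_count.
rewrite [in RHS]big_mkcond big_allpairs_dep iotaE big_mkord -natz natr_sum coef_sum.
apply: eq_bigr => n _; rewrite psi3_term_prod prod_tuples_upto coef_sum natr_sum.
by apply: eq_bigr => t _; rewrite coefXn eq_sym; case: eqP.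
Qed.

Local Close Scope ring_scope.

Theorem theorem27 :
  forall N : nat,
  exists l : seq (seq part),
    [/\ uniq l,
        (forall s : seq part, (s \in l) = psi3_partition N s) &
        Posz (size l) = psi3_coef N].
Proof.
move=> N; exists (map diag_chain (psi3_codes N)); split.
- by rewrite map_inj_uniq ?filter_uniq ?uniq_short_seqs //; exact: diag_chain_inj.
- move=> s; apply/mapP/idP => [[r r_in ->] | /psi3_partition_code [s_code sE]].
    by move: r_in; rewrite mem_psi3_codes => /andP [r_pos wr]; rewrite psi3_partition_diag_chain.
  by exists (map snd s).
- by rewrite size_map psi3_coef_count.
Qed.
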